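(* Let $M=4Z+3$ with $Z\ge1$ an integer, and let $\gamma\neq0$ and $J$ be real. Consider on the open chain of $M$ sites $$H=\sum_{m=1}^{M-1}\Big(J\, c_{m+1}^\dagger c_m\sigma_{m+1}^+ + \text{h.c.}\Big) - \sum_{m=1}^{M-1}\gamma\Big(c_{m+1}^\dagger c_m + \text{h.c.}\Big).$$ Then the subspace of states with exactly one fermion and spin on site $1$ equal to $|\uparrow\rangle$ contains at least $2^{3Z+1}$ linearly independent states $|\Psi\rangle$ satisfying $H^2|\Psi\rangle=(2\gamma^2+J^2)|\Psi\rangle$, each of which generates a two-dimensional Krylov subspace $\mathrm{span}\{|\Psi\rangle, H|\Psi\rangle\}$ (so the Hamiltonian has at least $2^{3Z+1}$ two-dimensional Krylov subspaces in this sector).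
   Context: Each site carries one spinless fermion mode ($c_m,c_m^\dagger$, canonical anticommutation relations) and one spin-$1/2$ with basis $|\uparrow\rangle=|1\rangle$, $|\downarrow\rangle=|0\rangle$ ($\sigma^z|1\rangle=|1\rangle$); $\sigma_m^+=|1\rangle\langle 0|$ acting on spin $m$ and $\sigma_m^-=(\sigma_m^+)^\dagger$. The Krylov subspace generated by $|\Psi\rangle$ is the span of $\{H^n|\Psi\rangle: n\ge 0\}$. *)

From HB Require Import structures.
From mathcomp Require Import all_boot all_order all_algebra.
Set Implicit Arguments. Unset Strict Implicit. Unset Printing Implicit Defensive.
Import Order.TTheory GRing.Theory Num.Theory.
Local Open Scope ring_scope.

(* Sites are indexed 0..M-1 (site m of the paper is index m-1).
   Fock basis of the chain: (fermion occupations, spin configuration),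
   with spin value true = |up> = |1>, false = |down> = |0>. *)
Notation basis M := ({ffun 'I_M -> bool} * {ffun 'I_M -> bool})%type.

Notation state M C := {ffun basis M -> C^o}.

Section Ops.
Variables (M : nat) (C : numClosedFieldType).

Definition setb (f : {ffun 'I_M -> bool}) (m : 'I_M) (v : bool) : {ffun 'I_M -> bool} :=
  [ffun k => if k == m then v else f k].

Definition jw_sign (n : {ffun 'I_M -> bool}) (m : 'I_M) : C :=
  (-1) ^+ #|[set k : 'I_M | (val k < val m)%N && n k]|.

(* fermion annihilation c_m:  c_m |n> = sign * [n_m] |n - e_m> *)
Definition cop (m : 'I_M) (psi : state M C) : state M C :=
  [ffun b : basis M => if ~~ b.1 m then jw_sign b.1 m * psi (setb b.1 m true, b.2) else 0].

Definition cdag (m : 'I_M) (psi : state M C) : state M C :=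
  [ffun b : basis M => if b.1 m then jw_sign b.1 m * psi (setb b.1 m false, b.2) else 0].

(* sigma_m^+ = |1><0| on spin m *)
Definition sigp (m : 'I_M) (psi : state M C) : state M C :=
  [ffun b : basis M => if b.2 m then psi (b.1, setb b.2 m false) else 0].

Definition sigm (m : 'I_M) (psi : state M C) : state M C :=
  [ffun b : basis M => if ~~ b.2 m then psi (b.1, setb b.2 m true) else 0].

(* H = sum_{m=1}^{M-1} ( J c_{m+1}^+ c_m s_{m+1}^+ + h.c. )
       - sum_{m=1}^{M-1} gamma ( c_{m+1}^+ c_m + h.c. ),
   with J, gamma real, so h.c. of the first term is J s_{m+1}^- c_m^+ c_{m+1}. *)
Definition Ham (J gamma : C) (psi : state M C) : state M C :=
  \sum_(a : 'I_M) \sum_(b : 'I_M | val b == (val a).+1)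
    (J *: (cdag b (cop a (sigp b psi)) + sigm b (cdag a (cop b psi)))
     - gamma *: (cdag b (cop a psi) + cdag a (cop b psi))).

Definition in_sector (psi : state M C) : Prop :=
  forall b : basis M, psi b != 0 ->
    #|[set k : 'I_M | b.1 k]| = 1%N /\ (forall k : 'I_M, val k = 0%N -> b.2 k).

Definition lin_indep (k : nat) (v : 'I_k -> state M C) : Prop :=
  forall a : 'I_k -> C, \sum_(i < k) a i *: v i = 0 -> forall i, a i = 0.

Definition krylov (H : state M C -> state M C) (psi : state M C) (w : state M C) : Prop :=
  exists (N : nat) (a : 'I_N -> C), w = \sum_(n < N) a n *: iter n H psi.

Definition krylov_dim2 (H : state M C -> state M C) (psi : state M C) : Prop :=
  exists u v : state M C,
    [/\ krylov H psi u, krylov H psi v,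
        (forall a b : C, a *: u + b *: v = 0 -> a = 0 /\ b = 0)
      & forall w, krylov H psi w -> exists a b : C, w = a *: u + b *: v].

End Ops.

(* Sites are numbered from 0.  In the one-fermion sector H moves the fermion by one site, and
   the spin of the site it hops onto (to the right) or leaves (to the left) is acted on by
   T = J s+ - gamma or T' = J s- - gamma.  With s^2 = 4 gamma^2 + J^2 the matrix T'T has the
   eigenvalues l+- = (2 gamma^2 + J^2 +- J s) / 2, so l+ + l- = 2 gamma^2 + J^2, l+ l- = gamma^4.
   Cut the chain into blocks of four sites and give every site j a spin state "ahead" (before the
   fermion passes) and "behind" (after), with behind = T ahead unless j = 4k+4 and T' behind
   proportional to ahead unless j = 4k+3: eigenvectors of T'T on the sites 4k+1, 4k+2 and basis
   states on 4k+3, 4k+4, which leaves 3Z + 1 binary choices.  On the resulting family of product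
   states H acts as a weighted tight-binding chain for the fermion position, as long as the
   fermion avoids the sites 4k+3.  An amplitude psi on the sites 4k, 4k+2, with block ratios
   making H psi vanish on the sites 4k+3, gives phi = H psi on the sites 4k+1 and
   H phi = (l+ + l-) psi.  The components with the fermion on site 0 are distinct product states,
   so pairing with dual product states separates the 2^(3Z+1) states, and psi from H psi. *)

From HB Require Import structures.
From mathcomp Require Import all_boot all_order all_algebra.
From mathcomp Require Import zify ring.
Set Implicit Arguments. Unset Strict Implicit. Unset Printing Implicit Defensive.
Import Order.TTheory GRing.Theory Num.Theory.
Local Open Scope ring_scope.

Lemma bond_linearP (R : comNzRingType) (V : lmodType R) (c J g : R) (a1 b1 a2 b2 a3 b3 a4 b4 : V) :
  J *: (c *: a1 + b1 + (c *: a2 + b2)) - g *: (c *: a3 + b3 + (c *: a4 + b4)) =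
  c *: (J *: (a1 + a2) - g *: (a3 + a4)) + (J *: (b1 + b2) - g *: (b3 + b4)).
Proof.
rewrite (addrACA (c *: a1)) (addrACA (c *: a3)) -!scalerDr (scalerDr J) (scalerDr g) opprD addrACA.
by rewrite scalerBr !scalerA (mulrC c J) (mulrC c g).
Qed.

Lemma scale_sub_if (R : pzRingType) (V : lmodType R) (J g : R) (c1 c2 : bool) (x1 x2 y1 y2 : V) :
  J *: ((if c1 then x1 else 0) + (if c2 then y1 else 0))
    - g *: ((if c1 then x2 else 0) + (if c2 then y2 else 0))
  = (if c1 then J *: x1 - g *: x2 else 0) + (if c2 then J *: y1 - g *: y2 else 0).
Proof.
case: c1; case: c2; rewrite ?addr0 ?add0r ?scaler0 ?subr0 //.
by rewrite !scalerDr opprD addrACA.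
Qed.

Lemma sum_bonds (V : nmodType) (M : nat) (G : nat -> nat -> V) :
  \sum_(a < M) \sum_(b < M | b == a.+1 :> nat) G a b = \sum_(a < M | (a.+1 < M)%N) G a a.+1.
Proof. by rewrite [RHS]big_mkcond; apply: eq_bigr => a _; rewrite (big_ord1_eq _ (G a)). Qed.

Section TightBinding.
Variables (R : comNzRingType) (V : lmodType R) (N : nat) (w : nat -> R) (X : nat -> V).

Definition hop_amp (ps : nat -> R) (m : nat) : R :=
  (if (0 < m)%N then ps m.-1 else 0) + (if (m.+1 < N)%N then w m.+1 * ps m.+1 else 0).

Lemma sum_hop_amp ps :
  \sum_(0 <= m < N) ps m *: ((if (m.+1 < N)%N then X m.+1 else 0)
                             + (if (0 < m)%N then w m *: X m.-1 else 0))
  = \sum_(0 <= m < N) hop_amp ps m *: X m.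
Proof.
rewrite /hop_amp; case: N => [|n]; first by rewrite !big_geq.
under eq_bigr => m _ do rewrite scalerDr.
under [RHS]eq_bigr => m _ do rewrite scalerDl.
rewrite !big_split /=; congr (_ + _).
  rewrite big_nat_recr //= ltnn scaler0 addr0 big_nat_recl //= scale0r add0r.
  by apply: eq_big_nat => m /andP [_ mn]; rewrite ltnS mn.
rewrite big_nat_recl //= scaler0 add0r big_nat_recr //= ltnn scale0r addr0.
by apply: eq_big_nat => m /andP [_ mn]; rewrite ltnS mn scalerA mulrC.
Qed.

Lemma linear_chain (H : {linear V -> V}) (active : pred nat) ps :
  (forall m, (m < N)%N -> active m ->
     H (X m) = (if (m.+1 < N)%N then X m.+1 else 0) + (if (0 < m)%N then w m *: X m.-1 else 0)) ->
  (forall m, (m < N)%N -> ~~ active m -> ps m = 0) ->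
  H (\sum_(0 <= m < N) ps m *: X m) = \sum_(0 <= m < N) hop_amp ps m *: X m.
Proof.
move=> HX ps0; rewrite linear_sum -sum_hop_amp; apply: eq_big_nat => m /andP [_ mN].
rewrite linearZZ; case: (boolP (active m)) => am; first by rewrite HX.
by rewrite ps0 // !scale0r.
Qed.

End TightBinding.

Lemma bits_inj n a b : (a < 2 ^ n)%N -> (b < 2 ^ n)%N ->
  (forall t, (t < n)%N -> odd (a %/ 2 ^ t) = odd (b %/ 2 ^ t)) -> a = b.
Proof.
elim: n a b => [|n IH] a b ha hb same_bits; first by rewrite expn0 in ha hb; lia.
have := same_bits 0%N isT; rewrite expn0 !divn1 => odd_ab.
have half_ab : (a %/ 2 = b %/ 2)%N.
  apply: IH => [||t tn]; rewrite ?ltn_divLR // -?expnSr //.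
  by have := same_bits t.+1 tn; rewrite expnS !divnMA.
by rewrite (divn_eq a 2) (divn_eq b 2) !modn2 odd_ab half_ab.
Qed.

Section Spinor.
Variable C : fieldType.
Local Notation spinor := (bool -> C).

Definition ket (c : bool) : spinor := fun x => (x == c)%:R.

Definition raise (v : spinor) : spinor := fun x => if x then v false else 0.
Definition lower (v : spinor) : spinor := fun x => if x then 0 else v true.

Definition hop_factor (J g : C) (u : spinor -> spinor) (v : spinor) : spinor :=
  fun x => J * u v x - g * v x.

Definition pair (v w : spinor) : C := \sum_(x : bool) v x * w x.

Definition det2 (p q : spinor) : C := p false * q true - p true * q false.

Definition dual_vec (p q : spinor) (c : bool) : spinor := fun x =>
  (if c then (if x then - q false else q true) else (if x then p false else - p true)) / det2 p q.

Lemma pair_dual p q c c' :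
  det2 p q != 0 -> pair (if c' then p else q) (dual_vec p q c) = (c == c')%:R.
Proof. by rewrite /pair big_bool /dual_vec /det2 => d0; case: c; case: c' => /=; field. Qed.

End Spinor.

Arguments ket {C}.
Arguments raise {C}.
Arguments lower {C}.

Section HopEigen.
Variables (C : numFieldType) (J g s : C).
Hypothesis s2 : s ^+ 2 = 4 * g ^+ 2 + J ^+ 2.
Local Notation E2 := (2 * g ^+ 2 + J ^+ 2).
Local Notation T := (hop_factor J g raise).
Local Notation Td := (hop_factor J g lower).

Definition eigval (c : bool) : C := if c then (E2 + J * s) / 2 else (E2 - J * s) / 2.

Definition eigvec (c : bool) : bool -> C :=
  fun x => if x then (if c then (J - s) / 2 else (J + s) / 2) else g.

Lemma eigval_sum c : eigval c + eigval (~~ c) = E2.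
Proof.
have two0 : (2 : C) != 0 by rewrite pnatr_eq0.
by case: c; rewrite /eigval /=; field.
Qed.

Lemma eigval_prod : eigval true * eigval false = g ^+ 4.
Proof.
have two0 : (2 : C) != 0 by rewrite pnatr_eq0.
have -> : eigval true * eigval false = (E2 ^+ 2 - J ^+ 2 * s ^+ 2) / 4 by rewrite /eigval; field.
by rewrite s2; field.
Qed.

Lemma eigval_neq0 c : g != 0 -> eigval c != 0.
Proof.
move=> g0; have : eigval true * eigval false != 0 by rewrite eigval_prod expf_neq0.
by rewrite mulf_eq0 negb_or => /andP []; case: c.
Qed.

Lemma hop_hop_eigvec c x : Td (T (eigvec c)) x = eigval c * eigvec c x.
Proof.
have two0 : (2 : C) != 0 by rewrite pnatr_eq0.
(* The up components agree only modulo s^2 = 4 g^2 + J^2. *)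
have mod_s2 k (e : C) : e = k * (s ^+ 2 - (4 * g ^+ 2 + J ^+ 2)) -> e = 0.
  by rewrite s2 subrr mulr0.
apply/eqP; rewrite -subr_eq0; apply/eqP; rewrite /hop_factor /raise /lower /eigvec /eigval.
by case: x; [apply: (mod_s2 (J / 4)) | apply: (mod_s2 0)]; case: c => /=; field.
Qed.

End HopEigen.

Section SingleFermion.
Variables (M : nat) (C : numClosedFieldType).
Local Notation st := (state M C).
Local Notation occ := {ffun 'I_M -> bool}.

Lemma cop_is_linear m : linear (@cop M C m).
Proof.
by move=> a x y; apply/ffunP => b; rewrite !ffunE; case: ifP; rewrite ?scaler0 ?addr0 // mulrDr scalerAr.
Qed.
HB.instance Definition _ m := GRing.isLinear.Build C st st *:%R (@cop M C m) (cop_is_linear m).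

Lemma cdag_is_linear m : linear (@cdag M C m).
Proof.
by move=> a x y; apply/ffunP => b; rewrite !ffunE; case: ifP; rewrite ?scaler0 ?addr0 // mulrDr scalerAr.
Qed.
HB.instance Definition _ m := GRing.isLinear.Build C st st *:%R (@cdag M C m) (cdag_is_linear m).

Lemma sigp_is_linear m : linear (@sigp M C m).
Proof. by move=> a x y; apply/ffunP => b; rewrite !ffunE; case: ifP; rewrite ?scaler0 ?addr0. Qed.
HB.instance Definition _ m := GRing.isLinear.Build C st st *:%R (@sigp M C m) (sigp_is_linear m).

Lemma sigm_is_linear m : linear (@sigm M C m).
Proof. by move=> a x y; apply/ffunP => b; rewrite !ffunE; case: ifP; rewrite ?scaler0 ?addr0. Qed.
HB.instance Definition _ m := GRing.isLinear.Build C st st *:%R (@sigm M C m) (sigm_is_linear m).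

Lemma Ham_is_linear J g : linear (@Ham M C J g).
Proof.
move=> c x y; rewrite /Ham.
under eq_bigr => a _ do under eq_bigr => b _ do rewrite !linearP bond_linearP.
by rewrite scaler_sumr -big_split; apply: eq_bigr => a _; rewrite scaler_sumr -big_split.
Qed.
HB.instance Definition _ J g := GRing.isLinear.Build C st st *:%R (@Ham M C J g) (Ham_is_linear J g).

Local Notation spinor := (bool -> C).

Definition single (m : nat) : occ := [ffun k => val k == m].

Definition prod_state (m : nat) (f : nat -> spinor) : st :=
  [ffun b : basis M => if b.1 == single m then \prod_(j < M) f j (b.2 j) else 0].

Definition set_site (f : nat -> spinor) (j : nat) (v : spinor) : nat -> spinor :=
  fun k => if k == j then v else f k.

Lemma prod_setb (f : nat -> spinor) (s : occ) (j : 'I_M) v :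
  \prod_(k < M) f k (setb s j v k) = f j v * \prod_(k < M | k != j) f k (s k).
Proof.
rewrite (bigD1 j) //= ffunE eqxx; congr (_ * _).
by apply: eq_bigr => k /negbTE kj; rewrite ffunE kj.
Qed.

Lemma prod_set_site (f : nat -> spinor) (s : occ) (j : 'I_M) v :
  \prod_(k < M) set_site f j v k (s k) = v (s j) * \prod_(k < M | k != j) f k (s k).
Proof.
rewrite (bigD1 j) //= /set_site eqxx; congr (_ * _).
by apply: eq_bigr => k /negbTE kj; rewrite /set_site; have -> : (k : nat) == j = false := kj.
Qed.

Lemma prod_state_rescale m (f h : nat -> spinor) (j : 'I_M) c :
  (forall k : 'I_M, k != j -> f k =1 h k) -> f j =1 (fun x => c * h j x) ->
  prod_state m f = c *: prod_state m h.
Proof.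
move=> fh fj; apply/ffunP => -[n s]; rewrite !ffunE /= -[c *: _]/(c * _).
case: ifP => _; last by rewrite mulr0.
rewrite (bigD1 j) // [in RHS](bigD1 j) //= fj -mulrA; congr (_ * (_ * _)).
by apply: eq_bigr => k kj; rewrite fh.
Qed.

Lemma sigp_prod_state (j : 'I_M) m f :
  sigp j (prod_state m f) = prod_state m (set_site f j (raise (f j))).
Proof.
apply/ffunP => -[n s]; rewrite !ffunE /= prod_set_site /raise.
by case: (s j); case: (n == single m); rewrite ?prod_setb ?mul0r.
Qed.

Lemma sigm_prod_state (j : 'I_M) m f :
  sigm j (prod_state m f) = prod_state m (set_site f j (lower (f j))).
Proof.
apply/ffunP => -[n s]; rewrite !ffunE /= prod_set_site /lower.
by case: (s j); case: (n == single m); rewrite ?prod_setb ?mul0r.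
Qed.

Lemma jw_sign_empty_prefix (n : occ) (m : 'I_M) :
  (forall k : 'I_M, (k < m)%N -> n k = false) -> jw_sign C n m = 1.
Proof.
move=> n0; rewrite /jw_sign (_ : [set k | _] = set0) ?cards0 //.
by apply/setP => k; rewrite !inE; case: ltnP => // /n0 ->.
Qed.

Lemma single_hop (n : occ) (a b : 'I_M) m :
  [&& n b, ~~ setb n b false a & setb (setb n b false) a true == single m]
  = (n == single b) && (a == m :> nat).
Proof.
apply/and3P/andP => [[nb na /eqP h] | [/eqP -> /eqP <-]].
- have /esym/eqP am : true = (a == m :> nat).
    by have := congr1 (fun f : occ => f a) h; rewrite !ffunE eqxx.
  split; last exact/eqP.
  apply/eqP/ffunP => k; have := congr1 (fun f : occ => f k) h; move: na.
  rewrite !ffunE -am; case: (eqVneq k b) => [-> _ _ | kb]; first by rewrite nb eqxx.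
  have /negbTE kb' : (k != b :> nat) := kb.
  rewrite kb'; move: kb; case: (eqVneq k a) => [-> /negbTE -> /negbTE // | ka _ _ ->].
  exact: negbTE.
- rewrite !ffunE eqxx; split=> //; first by case: (eqVneq a b).
  apply/eqP/ffunP => k; rewrite !ffunE.
  case: (eqVneq k a) => [-> | ka]; first by rewrite eqxx.
  have /negbTE -> : (k != a :> nat) := ka.
  by case: (eqVneq k b) => // kb; exact: negbTE kb.
Qed.

(* With a single fermion both Jordan-Wigner strings are empty. *)
Lemma cdag_cop_prod_state (a b : 'I_M) m f :
  cdag b (cop a (prod_state m f)) = if a == m :> nat then prod_state b f else 0.
Proof.
apply/ffunP => -[n s]; rewrite [LHS]ffunE /= [cop _ _ _]ffunE [prod_state _ _ _]ffunE /=.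
have := single_hop n a b m.
case: (boolP ((n == single b) && (a == m :> nat))) => [/andP [/eqP nb /eqP am] | hop].
  move/and3P=> [-> -> ->]; rewrite am eqxx ffunE /= nb eqxx.
  rewrite !jw_sign_empty_prefix ?mul1r // => k; rewrite !ffunE.
    by case: (eqVneq k b) => // kb _; exact: negbTE kb.
  by move=> kb; apply/negbTE; rewrite neq_ltn kb.
have -> : (if a == m :> nat then prod_state b f else 0) (n, s) = 0.
  case: eqP => am; rewrite ffunE //=.
  by move: hop; rewrite am eqxx andbT => /negbTE ->.
by case: (n b); case: (~~ _); case: (_ == _); rewrite ?mulr0.
Qed.

Lemma hop_prod_state J g (u : spinor -> spinor) k f (j : 'I_M) :
  J *: prod_state k (set_site f j (u (f j))) - g *: prod_state k f
  = prod_state k (set_site f j (hop_factor J g u (f j))).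
Proof.
apply/ffunP => -[n s]; rewrite !ffunE /= -[J *: _]/(J * _) -[g *: _]/(g * _).
case: ifP => _; last by rewrite !mulr0 subrr.
rewrite !prod_set_site [X in g * X](bigD1 j) //= /hop_factor.
by rewrite mulrBl !mulrA.
Qed.

Lemma Ham_prod_state J g m f : (m < M)%N ->
  Ham J g (prod_state m f) =
    (if (m.+1 < M)%N then prod_state m.+1 (set_site f m.+1 (hop_factor J g raise (f m.+1)))
     else 0)
  + (if (0 < m)%N then prod_state m.-1 (set_site f m (hop_factor J g lower (f m))) else 0).
Proof.
move=> mM; pose R k := prod_state k (set_site f k (hop_factor J g raise (f k))).
pose L k l := prod_state k (set_site f l (hop_factor J g lower (f l))).
transitivity (\sum_(a < M) \sum_(b < M | b == a.+1 :> nat)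
   ((if a == m :> nat then R b else 0) + (if b == m :> nat then L a b else 0))).
  apply: eq_bigr => a _; apply: eq_bigr => b _.
  rewrite sigp_prod_state !cdag_cop_prod_state (fun_if (sigm b)) linear0 sigm_prod_state.
  by rewrite scale_sub_if !hop_prod_state.
rewrite (@sum_bonds _ M (fun a b => (if a == m then R b else 0) + (if b == m then L a b else 0))).
rewrite big_split /= -!big_mkcondr.
rewrite (big_ord1_cond_eq _ (fun a => R a.+1) (fun a => a.+1 < M)%N) mM /=; congr (_ + _).
case: m mM => [|m] mM; first by rewrite big_pred0 // => a; rewrite andbF.
rewrite (eq_bigl (fun a : 'I_M => (a.+1 < M)%N && (a == m :> nat))) => [|a]; last by rewrite eqSS.
by rewrite (big_ord1_cond_eq _ (fun a => L a a.+1) (fun a => a.+1 < M)%N) mM (ltnW mM).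
Qed.

Lemma in_sector0 : in_sector (0 : st).
Proof. by move=> b; rewrite ffunE eqxx. Qed.

Lemma in_sectorD (x y : st) : in_sector x -> in_sector y -> in_sector (x + y).
Proof.
move=> hx hy b; rewrite ffunE.
by case: (eqVneq (x b) 0) => [-> | /hx //]; rewrite add0r => /hy.
Qed.

Lemma in_sectorZ c (x : st) : in_sector x -> in_sector (c *: x).
Proof. by move=> hx b; rewrite ffunE; case: (eqVneq (x b) 0) => [-> | /hx //]; rewrite scaler0 eqxx. Qed.

Lemma in_sector_prod_state m f : (m < M)%N -> f 0%N false = 0 -> in_sector (prod_state m f).
Proof.
move=> mM f0 [n s]; rewrite ffunE /=; case: (eqVneq n (single m)) => [-> nz | _]; last by rewrite eqxx.
split.
  rewrite (_ : [set k | single m k] = [set Ordinal mM]) ?cards1 //.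
  by apply/setP => k; rewrite !inE ffunE.
move=> k k0; apply: contraNT nz => /negbTE sk.
by rewrite (bigD1 k) //= k0 sk f0 mul0r.
Qed.

Definition pair0 (gd : nat -> spinor) (X : st) : C :=
  \sum_(s : occ) X (single 0, s) * \prod_(j < M) gd j (s j).

Lemma pair0_is_scalar gd : scalar (pair0 gd).
Proof.
move=> c x y; rewrite /pair0 mulr_sumr -big_split; apply: eq_bigr => s _.
by rewrite !ffunE -[c *: _]/(c * _) mulrDl mulrA.
Qed.
HB.instance Definition _ gd := GRing.isLinear.Build C st C *%R (pair0 gd) (pair0_is_scalar gd).

Lemma pair0_prod_state gd m f : (0 < M)%N ->
  pair0 gd (prod_state m f) = if m == 0%N then \prod_(j < M) pair (f j) (gd j) else 0.
Proof.
move=> M0; rewrite /pair0; under eq_bigr => s _ do rewrite ffunE /=.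
case: (eqVneq m 0%N) => [-> | m0].
  rewrite eqxx /pair (bigA_distr_bigA (fun (j : 'I_M) x => f j x * gd j x)).
  by apply: eq_bigr => s _; rewrite big_split.
apply: big1 => s _; have -> : (single 0 == single m) = false.
  apply/negbTE; apply: contra_neq m0 => /(congr1 (fun n : occ => n (Ordinal M0))).
  by rewrite !ffunE eqxx => /esym/eqP.
exact: mul0r.
Qed.

Lemma lin_indep_biorthogonal k (v : 'I_k -> st) (gd : 'I_k -> nat -> spinor) :
  (forall i, pair0 (gd i) (v i) != 0) -> (forall i j, i != j -> pair0 (gd i) (v j) = 0) ->
  lin_indep v.
Proof.
move=> lii lij a sum0 i; have /eqP := congr1 (pair0 (gd i)) sum0.
rewrite linear_sum linear0 (bigD1 i) //= big1 ?addr0 => [|j ji]; last first.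
  by rewrite scalarZ /= lij 1?eq_sym // mulr0.
by rewrite scalarZ /= mulf_eq0 (negbTE (lii i)) orbF => /eqP.
Qed.

Lemma lin_indep2_pair0 gd (psi phi : st) :
  pair0 gd psi != 0 -> pair0 gd phi = 0 -> phi != 0 ->
  forall a b : C, a *: psi + b *: phi = 0 -> a = 0 /\ b = 0.
Proof.
move=> lpsi lphi phi0 a b ab0.
have a0 : a = 0.
  have /eqP := congr1 (pair0 gd) ab0; rewrite linearD !scalarZ /= lphi mulr0 addr0 linear0.
  by rewrite mulf_eq0 (negbTE lpsi) orbF => /eqP.
split=> //; move/eqP: ab0; rewrite a0 scale0r add0r scaler_eq0 (negbTE phi0) orbF.
exact/eqP.
Qed.

Lemma krylov_dim2_cycle (H : {linear st -> st}) (psi phi : st) E :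
  H psi = phi -> H phi = E *: psi ->
  (forall a b : C, a *: psi + b *: phi = 0 -> a = 0 /\ b = 0) -> krylov_dim2 H psi.
Proof.
move=> Hpsi Hphi indep; exists psi, phi; split=> //.
- by exists 1%N, (fun _ => 1); rewrite big_ord1 scale1r.
- exists 2%N, (fun n : 'I_2 => (n == 1 :> nat)%:R).
  by rewrite big_ord_recr big_ord1 /= scale0r add0r scale1r Hpsi.
have iterH n : exists a b, iter n H psi = a *: psi + b *: phi.
  elim: n => [|n [a [b IH]]]; first by exists 1, 0; rewrite scale1r scale0r addr0.
  by exists (b * E), a; rewrite iterS IH linearD !linearZ /= Hpsi Hphi scalerA addrC.
move=> w [N [c ->]]; elim/big_ind: _ => [|x y [a [b ->]] [a' [b' ->]] | n _].
- by exists 0, 0; rewrite !scale0r addr0.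
- by exists (a + a'), (b + b'); rewrite !scalerDl addrACA.
have [a [b ->]] := iterH n.
by exists (c n * a), (c n * b); rewrite scalerDr !scalerA.
Qed.

End SingleFermion.

Section Model.
Variables (C : numClosedFieldType) (Z : nat) (J g s : C).
Hypotheses (s2 : s ^+ 2 = 4 * g ^+ 2 + J ^+ 2) (g0 : g != 0) (s0 : s != 0).
Local Notation M := (4 * Z + 3)%N.
Local Notation st := (state M C).
Local Notation E2 := (2 * g ^+ 2 + J ^+ 2).
Local Notation T := (hop_factor J g raise).
Local Notation Td := (hop_factor J g lower).
Local Notation eigval := (eigval J g s).
Local Notation eigvec := (eigvec J g s).

Definition ahead (c : bool) (j : nat) : bool -> C :=
  if (j %% 4 == 0)%N then Td (ket c) else if (j %% 4 == 3)%N then ket c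
  else if (j %% 4 == 1)%N then eigvec c else eigvec (~~ c).

Definition behind (c : bool) (j : nat) : bool -> C :=
  if j == 0%N then ket true else if (j %% 4 == 0)%N then ket c else T (ahead c j).

Definition back_weight (c : bool) (j : nat) : C :=
  if (j %% 4 == 1)%N then eigval c else if (j %% 4 == 2)%N then eigval (~~ c) else 1.

Lemma hop_behind c j : (0 < j)%N -> (j %% 4 != 3)%N ->
  Td (behind c j) =1 (fun x => back_weight c j * ahead c j x).
Proof.
move=> j0 /eqP j3 x; rewrite /behind /ahead /back_weight (negbTE (lt0n_neq0 j0)).
have : (j %% 4 = 0 \/ j %% 4 = 1 \/ j %% 4 = 2)%N by lia.
by case=> [-> | [-> | ->]] /=; rewrite ?mul1r // hop_hop_eigvec.
Qed.

(* Sites 4k+1 and 4k+2 share bit 3k; sites 4k+3 and 4k+4 carry bits 3k+1 and 3k+2. *)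
Definition bit_index (j : nat) : nat :=
  if (j %% 4 == 0)%N then (3 * (j %/ 4)).-1
  else if (j %% 4 == 3)%N then (3 * (j %/ 4)).+1 else (3 * (j %/ 4))%N.

Definition site_bit (i j : nat) : bool := odd (i %/ 2 ^ bit_index j)%N.

Definition config (i m : nat) : nat -> bool -> C :=
  fun j => if (j <= m)%N then behind (site_bit i j) j else ahead (site_bit i j) j.

Definition chain_weight (i m : nat) : C := back_weight (site_bit i m) m.

Lemma Ham_config i m : (m < M)%N -> (m %% 4 != 3)%N ->
  Ham J g (prod_state M m (config i m)) =
    (if (m.+1 < M)%N then prod_state M m.+1 (config i m.+1) else 0)
  + (if (0 < m)%N then chain_weight i m *: prod_state M m.-1 (config i m.-1) else 0).
Proof.
move=> mM m3; rewrite Ham_prod_state //; congr (_ + _); case: ifP => h //.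
  rewrite -[RHS]scale1r.
  apply: (@prod_state_rescale _ _ _ _ _ (Ordinal h)) => /= [k km x | x].
    have /negbTE km' : (k != m.+1 :> nat) := km.
    by rewrite /set_site km' /config [(k <= m.+1)%N]leq_eqVlt km'.
  rewrite /set_site eqxx /config ltnn leqnn mul1r /behind /=.
  by have -> : (m.+1 %% 4 == 0)%N = false by apply/negbTE/eqP; move/eqP: m3; lia.
apply: (@prod_state_rescale _ _ _ _ _ (Ordinal mM)) => /= [k km x | x].
  have /negbTE km' : (k != m :> nat) := km.
  rewrite /set_site km' /config; case: m h mM m3 km km' => // m _ _ _ _ km' /=.
  by rewrite [(k <= m.+1)%N]leq_eqVlt km'.
rewrite /set_site eqxx /config leqnn (hop_behind _ h m3).
by case: m h {mM m3} => // m _; rewrite /= ltnn.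
Qed.

(* Makes the amplitude of H psi vanish on the sites 4k+3. *)
Fixpoint block_amp (i k : nat) : C :=
  if k is k'.+1 then - block_amp i k' / eigval (site_bit i (4 * k + 1)) else 1.

Definition amp_psi (i m : nat) : C :=
  if (m %% 4 == 0)%N then eigval (site_bit i m.+1) * block_amp i (m %/ 4)
  else if (m %% 4 == 2)%N then block_amp i (m %/ 4) else 0.

Definition amp_phi (i m : nat) : C := if (m %% 4 == 1)%N then E2 * block_amp i (m %/ 4) else 0.

Lemma hop_amp_psi i m : (m < M)%N -> hop_amp M (chain_weight i) (amp_psi i) m = amp_phi i m.
Proof.
move=> mM; rewrite /hop_amp /amp_phi /amp_psi /chain_weight /back_weight.
have : (m %% 4 = 0 \/ m %% 4 = 1 \/ m %% 4 = 2 \/ m %% 4 = 3)%N by lia.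
case=> [h|[h|[h|h]]]; rewrite h /=.
- have -> : (m.+1 %% 4 = 1)%N by lia.
  rewrite /=; case: ifP => m0; [have -> : (m.-1 %% 4 = 3)%N by lia|]; rewrite /=;
  by case: ifP => _; rewrite ?mulr0 ?addr0.
- have m0 : (0 < m)%N by lia.
  have h1 : (m.+1 %% 4 = 2)%N by lia.
  have h2 : (m.-1 %% 4 = 0)%N by lia.
  have h3 : (m.+1 < M)%N by lia.
  have d1 : (m.+1 %/ 4 = m %/ 4)%N by lia.
  have d2 : (m.-1 %/ 4 = m %/ 4)%N by lia.
  have same_bit : site_bit i m.+1 = site_bit i m by rewrite /site_bit /bit_index h h1 d1.
  rewrite m0 h1 h2 h3 /= d1 d2 prednK // same_bit.
  by rewrite -mulrDl eigval_sum.
- have h1 : (m.+1 %% 4 = 3)%N by lia.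
  have h2 : (m.-1 %% 4 = 1)%N by lia.
  have m0 : (0 < m)%N by lia.
  by rewrite m0 h1 h2 /=; case: ifP => _; rewrite ?mulr0 ?addr0.
- have m0 : (0 < m)%N by lia.
  have h1 : (m.+1 %% 4 = 0)%N by lia.
  have h2 : (m.-1 %% 4 = 2)%N by lia.
  have h3 : (m.+1 < M)%N by lia.
  have d1 : (m.+1 %/ 4 = (m.-1 %/ 4).+1)%N by lia.
  rewrite m0 h1 h2 h3 /= d1 /=.
  have -> : (4 * (m.-1 %/ 4).+1 + 1 = m.+2)%N by lia.
  have := eigval_neq0 s2 (site_bit i m.+2) g0 => ne.
  by rewrite mul1r; field.
Qed.

Lemma hop_amp_phi i m : (m < M)%N -> hop_amp M (chain_weight i) (amp_phi i) m = E2 * amp_psi i m.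
Proof.
move=> mM; rewrite /hop_amp /amp_phi /amp_psi /chain_weight /back_weight.
have : (m %% 4 = 0 \/ m %% 4 = 1 \/ m %% 4 = 2 \/ m %% 4 = 3)%N by lia.
case=> [h|[h|[h|h]]]; rewrite h /=.
- have h1 : (m.+1 %% 4 = 1)%N by lia.
  have h3 : (m.+1 < M)%N by lia.
  have d1 : (m.+1 %/ 4 = m %/ 4)%N by lia.
  rewrite h1 h3 /= d1.
  have -> : (if (0 < m)%N then (if (m.-1 %% 4 == 1)%N then E2 * block_amp i (m.-1 %/ 4) else 0)
             else 0) = 0.
    by case: ifP => // m0; have -> : (m.-1 %% 4 = 3)%N by lia.
  by rewrite add0r mulrCA.
- have m0 : (0 < m)%N by lia.
  have h1 : (m.+1 %% 4 = 2)%N by lia.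
  have h2 : (m.-1 %% 4 = 0)%N by lia.
  by rewrite m0 h1 h2 /=; case: ifP => _; rewrite ?mulr0 ?addr0.
- have m0 : (0 < m)%N by lia.
  have h1 : (m.+1 %% 4 = 3)%N by lia.
  have h2 : (m.-1 %% 4 = 1)%N by lia.
  have d2 : (m.-1 %/ 4 = m %/ 4)%N by lia.
  by rewrite m0 h1 h2 /= d2; case: ifP => _; rewrite ?mulr0 ?addr0.
- have m0 : (0 < m)%N by lia.
  have h1 : (m.+1 %% 4 = 0)%N by lia.
  have h2 : (m.-1 %% 4 = 2)%N by lia.
  by rewrite m0 h1 h2 /=; case: ifP => _; rewrite ?mulr0 ?addr0.
Qed.

Definition chain_state (i : nat) (ps : nat -> C) : st :=
  \sum_(0 <= m < M) ps m *: prod_state M m (config i m).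

Lemma Ham_chain_state i ps : (forall m, (m < M)%N -> (m %% 4 = 3)%N -> ps m = 0) ->
  Ham J g (chain_state i ps) = chain_state i (hop_amp M (chain_weight i) ps).
Proof.
move=> ps3; apply: (@linear_chain _ _ M (chain_weight i) (fun m => prod_state M m (config i m)) _
                      (fun m => (m %% 4 != 3)%N)) => m mM; first exact: Ham_config.
by rewrite negbK => /eqP; apply: ps3.
Qed.

Lemma Ham_chain_psi i : Ham J g (chain_state i (amp_psi i)) = chain_state i (amp_phi i).
Proof.
rewrite Ham_chain_state => [|m _ m3]; last by rewrite /amp_psi m3.
by apply: eq_big_nat => m /andP [_ mM]; rewrite hop_amp_psi.
Qed.

Lemma Ham_chain_phi i : Ham J g (chain_state i (amp_phi i)) = E2 *: chain_state i (amp_psi i).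
Proof.
rewrite Ham_chain_state => [|m _ m3]; last by rewrite /amp_phi m3.
rewrite /chain_state scaler_sumr; apply: eq_big_nat => m /andP [_ mM].
by rewrite hop_amp_phi // scalerA.
Qed.

Definition dual_config (i j : nat) : bool -> C :=
  if j == 0%N then ket true else dual_vec (ahead true j) (ahead false j) (site_bit i j).

Lemma det2_ahead j : det2 (ahead true j) (ahead false j) != 0.
Proof.
have two0 : (2 : C) != 0 by rewrite pnatr_eq0.
rewrite /det2 /ahead /hop_factor /lower /ket /eigvec.
have : (j %% 4 = 0 \/ j %% 4 = 1 \/ j %% 4 = 2 \/ j %% 4 = 3)%N by lia.
case=> [->|[->|[->|->]]] /=.
- have -> : (J * 1%:R - g * 0%:R) * (J * 0 - g * 0%:R) - (J * 0 - g * 1%:R) * (J * 0 - g * 1%:R)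
      = - g ^+ 2 by ring.
  by rewrite oppr_eq0 expf_neq0.
- have -> : g * ((J + s) / 2) - (J - s) / 2 * g = g * s by field.
  by rewrite mulf_neq0.
- have -> : g * ((J - s) / 2) - (J + s) / 2 * g = - (g * s) by field.
  by rewrite oppr_eq0 mulf_neq0.
- have -> : (0%:R : C) * 0%:R - 1%:R * 1%:R = -1 by ring.
  by rewrite oppr_eq0 oner_eq0.
Qed.

Lemma pair_config_dual i i' j :
  pair (config i' 0 j) (dual_config i j) = ((j == 0%N) || (site_bit i j == site_bit i' j))%:R.
Proof.
rewrite /config /dual_config; case: (posnP j) => [-> | j0].
  by rewrite /behind /pair big_bool /ket /= mul0r addr0 mulr1.
rewrite leqNgt j0 /= -(pair_dual _ _ (det2_ahead j)).
by case: (site_bit i' j).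
Qed.

Lemma pair0_chain_state i i' ps :
  pair0 (dual_config i) (chain_state i' ps)
  = ps 0%N * \prod_(j < M) ((j == 0 :> nat) || (site_bit i j == site_bit i' j))%:R.
Proof.
have M0 : (0 < M)%N by rewrite addn3.
rewrite /chain_state linear_sum big_ltn // [X in _ + X]big1_seq => [|m /andP [_]]; last first.
  rewrite mem_index_iota => /andP [m0 _].
  by rewrite scalarZ /= pair0_prod_state // (negbTE (lt0n_neq0 m0)) mulr0.
rewrite addr0 scalarZ /= pair0_prod_state //=; congr (_ * _).
by apply: eq_bigr => j _; rewrite pair_config_dual.
Qed.

Lemma pair0_chain_psi i : pair0 (dual_config i) (chain_state i (amp_psi i)) = eigval (site_bit i 1).
Proof.
rewrite pair0_chain_state big1 => [|j _]; last by rewrite eqxx orbT.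
by rewrite /amp_psi /= !mulr1.
Qed.

Lemma pair0_chain_phi i : pair0 (dual_config i) (chain_state i (amp_phi i)) = 0.
Proof. by rewrite pair0_chain_state mul0r. Qed.

Lemma pair0_chain_state_diff i i' ps j : (0 < j < M)%N -> site_bit i j != site_bit i' j ->
  pair0 (dual_config i) (chain_state i' ps) = 0.
Proof.
case/andP=> j0 jM bit_ne; rewrite pair0_chain_state (bigD1 (Ordinal jM)) //=.
by rewrite (negbTE (lt0n_neq0 j0)) (negbTE bit_ne) mul0r mulr0.
Qed.

Definition site_of_bit (t : nat) : nat :=
  if (t %% 3 == 0)%N then (4 * (t %/ 3) + 1)%N
  else if (t %% 3 == 1)%N then (4 * (t %/ 3) + 3)%N else (4 * (t %/ 3) + 4)%N.

Lemma site_of_bitK t : bit_index (site_of_bit t) = t.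
Proof.
rewrite /site_of_bit /bit_index; set q := (t %/ 3)%N.
have : (t %% 3 = 0 \/ t %% 3 = 1 \/ t %% 3 = 2)%N by lia.
case=> [h | [h | h]]; rewrite h /=.
- have -> : ((4 * q + 1) %% 4 = 1)%N by lia.
  have -> : ((4 * q + 1) %/ 4 = q)%N by lia.
  by rewrite /q /=; lia.
- have -> : ((4 * q + 3) %% 4 = 3)%N by lia.
  have -> : ((4 * q + 3) %/ 4 = q)%N by lia.
  by rewrite /q /=; lia.
- have -> : ((4 * q + 4) %% 4 = 0)%N by lia.
  have -> : ((4 * q + 4) %/ 4 = q.+1)%N by lia.
  by rewrite /q /=; lia.
Qed.

Lemma site_of_bit_range t : (t < 3 * Z + 1)%N -> (0 < site_of_bit t < M)%N.
Proof.
move=> tZ; rewrite /site_of_bit; apply/andP.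
by case: ifP => /eqP h0; [|case: ifP => /eqP h1]; split; lia.
Qed.

Lemma distinct_site_bit i i' : (i < 2 ^ (3 * Z + 1))%N -> (i' < 2 ^ (3 * Z + 1))%N -> i != i' ->
  exists2 j, (0 < j < M)%N & site_bit i j != site_bit i' j.
Proof.
move=> hi hi' /eqP neq.
have [t bit_ne] : exists t : 'I_(3 * Z + 1), odd (i %/ 2 ^ t) != odd (i' %/ 2 ^ t).
  apply/existsP/contraT; rewrite negb_exists => /forallP same; exfalso; apply: neq.
  by apply: bits_inj hi hi' _ => t tZ; apply/eqP; have := same (Ordinal tZ); rewrite negbK.
by exists (site_of_bit t); rewrite ?site_of_bit_range // /site_bit site_of_bitK.
Qed.

Lemma in_sector_chain_state i ps : in_sector (chain_state i ps).
Proof.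
rewrite /chain_state big_seq; apply: big_ind => [|x y|m]; [exact: in_sector0 | exact: in_sectorD |].
rewrite mem_index_iota => /andP [_ mM].
by apply/in_sectorZ/in_sector_prod_state; rewrite // /config /behind.
Qed.

Lemma krylov_family : E2 != 0 ->
  exists Psi : 'I_(2 ^ (3 * Z + 1)) -> st,
    lin_indep Psi /\
    forall i, [/\ in_sector (Psi i), Ham J g (Ham J g (Psi i)) = E2 *: Psi i
                & krylov_dim2 (Ham J g) (Psi i)].
Proof.
move=> E0; exists (fun i => chain_state i (amp_psi i)); split.
  apply: (lin_indep_biorthogonal (gd := fun i => dual_config i)) => [i | i j ij].
    by rewrite pair0_chain_psi eigval_neq0.
  have [k kM bit_ne] := distinct_site_bit (ltn_ord i) (ltn_ord j) ij.
  exact: pair0_chain_state_diff kM bit_ne.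
have pair0_psi_neq0 i : pair0 (dual_config i) (chain_state i (amp_psi i)) != 0.
  by rewrite pair0_chain_psi eigval_neq0.
move=> i; split; [exact: in_sector_chain_state | by rewrite Ham_chain_psi Ham_chain_phi |].
apply: (krylov_dim2_cycle (Ham_chain_psi i) (Ham_chain_phi i)).
apply: (lin_indep2_pair0 (pair0_psi_neq0 i) (pair0_chain_phi i)).
apply: contra_neq (pair0_psi_neq0 i) => phi0.
have /eqP := Ham_chain_phi i; rewrite phi0 linear0 eq_sym scaler_eq0 (negbTE E0) /= => /eqP ->.
exact: linear0.
Qed.

End Model.

Theorem mainTheorem3 (C : numClosedFieldType) (Z : nat) (J gamma : C) :
  (1 <= Z)%N -> J \is Num.real -> gamma \is Num.real -> gamma != 0 ->
  exists Psi : 'I_(2 ^ (3 * Z + 1)) -> state (4 * Z + 3) C,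
    lin_indep Psi /\
    forall i,
      [/\ in_sector (Psi i),
          Ham J gamma (Ham J gamma (Psi i)) = (2 * gamma ^+ 2 + J ^+ 2) *: Psi i
        & krylov_dim2 (Ham J gamma) (Psi i)].
Proof.
(* The construction does not need 1 <= Z. *)
move=> _ Jr gr g0.
have g2_gt0 : 0 < gamma ^+ 2 by rewrite real_exprn_even_gt0 // g0 orbT.
have J2_ge0 : 0 <= J ^+ 2 by rewrite real_exprn_even_ge0.
have disc_gt0 : 0 < 4 * gamma ^+ 2 + J ^+ 2 by rewrite ltr_wpDr // mulr_gt0.
have E2_gt0 : 0 < 2 * gamma ^+ 2 + J ^+ 2 by rewrite ltr_wpDr // mulr_gt0.
apply: (@krylov_family _ Z J gamma (sqrtC (4 * gamma ^+ 2 + J ^+ 2))).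
- exact: sqrtCK.
- exact: g0.
- by rewrite sqrtC_eq0 lt0r_neq0.
- exact: lt0r_neq0.
Qed.
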